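(* Let $n$, $r$ and $k$ be positive integers with $n\ge 2r+1$, and suppose $\binom{n-r}{r}\ge k$ (so that $\gamma_{\times k,t}(K(n,r))$ is defined). Then $$\gamma_{\times k,t}(K(n,r))\ \ge\ \gamma_{\times k,t}(K(n+1,r)).$$
   Context: For integers $n\ge 2r$, the Kneser graph $K(n,r)$ has as vertices the $r$-element subsets of $[n]=\{1,\dots,n\}$, two vertices being adjacent iff they are disjoint sets. For a graph $G$ and positive integer $k$, a set $D\subseteq V(G)$ is a $k$-tuple total dominating set if $|N_G(u)\cap D|\ge k$ for every $u\in V(G)$, where $N_G(u)$ is the open neighborhood; $\gamma_{\times k,t}(G)$ is the minimum cardinality of such a set. It is defined only when the minimum degree of $G$ is at least $k$; the minimum degree of $K(n,r)$ is $\binom{n-r}{r}$. *)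

From mathcomp Require Import all_boot.
Unset Printing Implicit Defensive.

(* Kneser graph K(n,r): vertices are r-subsets of [n] = 'I_n (elements 0..n-1),
   adjacency = disjointness (for r >= 1 this is irreflexive). *)
Definition kneser_vertices (n r : nat) : {set {set 'I_n}} :=
  [set A : {set 'I_n} | #|A| == r].

Definition kneser_adj (n : nat) (A B : {set 'I_n}) : bool := [disjoint A & B].

Definition kneser_nbhd (n r : nat) (u : {set 'I_n}) : {set {set 'I_n}} :=
  [set v in kneser_vertices n r | kneser_adj n u v].

Definition is_ktuple_tds (n r k : nat) (D : {set {set 'I_n}}) : bool :=
  (D \subset kneser_vertices n r) &&
  [forall u : {set 'I_n}, (u \in kneser_vertices n r) ==> (k <= #|kneser_nbhd n r u :&: D|)].

(* gamma_{x k, t}(K(n,r)): minimum cardinality of a k-tuple total dominating set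
   (default value #|V| is only relevant when no such set exists). *)
Definition gamma_ktuple_total (n r k : nat) : nat :=
  \big[minn/#|kneser_vertices n r|]_(D : {set {set 'I_n}} | is_ktuple_tds n r k D) #|D|.

From HB Require Import structures.
From mathcomp Require Import all_boot.

Set Implicit Arguments.
Unset Strict Implicit.

(* Embed [n] into [n+1] and push a minimum k-tuple total dominating set D of
   K(n,r) forward. A vertex u of K(n+1,r) meets [n] in at most r points, so it
   can be replaced by an r-subset w of [n] containing its trace; every neighbour
   of w in D is disjoint from that trace, hence its image is a neighbour of u. *)

Lemma exists_card_superset (T : finType) (A : {set T}) m :
  #|A| <= m -> m <= #|T| -> exists2 B : {set T}, A \subset B & #|B| = m.
Proof.
elim: m A => [|m IHm] A leAm lemT.
  by exists A => //; apply/eqP; rewrite -leqn0.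
case: (ltngtP #|A| m.+1) leAm => // [ltAm _|eqAm _]; last by exists A.
have [B sAB cardB] := IHm A ltAm (ltnW lemT).
have [x /= notBx | allB] := pickP [pred x | x \notin B]; last first.
  suff eqBT : B = setT by move: lemT; rewrite -cardB eqBT cardsT ltnn.
  by apply/setP => x; rewrite inE; apply/negbFE/allB.
exists (x |: B); first exact: subset_trans sAB (subsetUr _ _).
by rewrite cardsU1 notBx cardB.
Qed.

Section WidenSet.

Variable n : nat.

Let widen : 'I_n -> 'I_n.+1 := widen_ord (leqnSn n).

Lemma widen_ord_inj : injective widen.
Proof. by move=> i j /(congr1 val) /= /val_inj. Qed.

Definition widen_set (A : {set 'I_n}) : {set 'I_n.+1} := widen @: A.

Lemma widen_set_inj : injective widen_set.
Proof. exact: imset_inj widen_ord_inj. Qed.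

Lemma card_widen_set (A : {set 'I_n}) : #|widen_set A| = #|A|.
Proof. exact: card_imset widen_ord_inj. Qed.

Lemma disjoint_widen_set (u : {set 'I_n.+1}) (v : {set 'I_n}) :
  [disjoint u & widen_set v] = [disjoint widen @^-1: u & v].
Proof.
apply/pred0P/pred0P => uv x /=.
  by rewrite inE -(mem_imset _ _ widen_ord_inj); apply: uv.
apply/negbTE/andP => -[ux /imsetP [i vi eq_x]].
by move: (uv i) => /=; rewrite inE -eq_x ux vi.
Qed.

Lemma widen_set_kneser_nbhd r (u : {set 'I_n.+1}) (w : {set 'I_n}) :
  widen @^-1: u \subset w ->
  widen_set @: kneser_nbhd n r w \subset kneser_nbhd n.+1 r u.
Proof.
move=> sub_uw; apply/subsetP => _ /imsetP [v + ->].
rewrite !inE /kneser_adj card_widen_set disjoint_widen_set => /andP [-> wv] /=.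
exact: disjointWl sub_uw wv.
Qed.

End WidenSet.

Lemma widen_set_ktuple_tds n r k (D : {set {set 'I_n}}) :
  r <= n -> is_ktuple_tds n r k D -> is_ktuple_tds n.+1 r k (@widen_set n @: D).
Proof.
move=> le_rn /andP [sDV dominates]; apply/andP; split.
  apply/subsetP => _ /imsetP [A DA ->].
  by move/subsetP/(_ A DA): sDV; rewrite !inE card_widen_set.
apply/forallP => u; apply/implyP; rewrite inE => /eqP card_u.
set trace := widen_ord (leqnSn n) @^-1: u.
have le_trace_r : #|trace| <= r.
  rewrite -card_u -(card_imset _ (@widen_ord_inj n)).
  by rewrite subset_leq_card // sub_imset_pre.
have := exists_card_superset le_trace_r; rewrite card_ord.
move=> /(_ le_rn) [w sub_trace_w card_w].
have := implyP (forallP dominates w); rewrite inE card_w eqxx => /(_ isT) k_le.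
apply: leq_trans k_le _.
rewrite -(card_imset _ (@widen_set_inj n)) imsetI; last first.
  exact: in2W (@widen_set_inj n).
exact/subset_leq_card/setSI/widen_set_kneser_nbhd.
Qed.

Lemma kneser_vertices_ktuple_tds n r k :
  k <= 'C(n - r, r) -> is_ktuple_tds n r k (kneser_vertices n r).
Proof.
move=> le_k_binom; apply/andP; split => //.
apply/forallP => u; apply/implyP; rewrite inE => /eqP card_u.
suff -> : kneser_nbhd n r u :&: kneser_vertices n r =
          [set A : {set 'I_n} | A \subset ~: u & #|A| == r].
  by rewrite cards_draws cardsCs setCK card_ord card_u.
apply/setP => A; rewrite !inE /kneser_adj disjoint_sym disjoints_subset.
by case: (#|A| == r); rewrite ?andbF ?andbT.
Qed.

HB.instance Definition _ := SemiGroup.isComLaw.Build nat minn minnA minnC.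

Lemma gamma_ktuple_total_le n r k (D : {set {set 'I_n}}) :
  is_ktuple_tds n r k D -> gamma_ktuple_total n r k <= #|D|.
Proof.
move=> tdsD; rewrite /gamma_ktuple_total.
by rewrite (big_rem_AC _ _ _ _ (mem_index_enum D)) tdsD geq_minl.
Qed.

Lemma leq_gamma_ktuple_total n r k m :
  (forall D, is_ktuple_tds n r k D -> m <= #|D|) ->
  m <= #|kneser_vertices n r| ->
  m <= gamma_ktuple_total n r k.
Proof.
move=> le_mD le_mV; apply: (big_ind (leq m)) => // x y.
by rewrite leq_min => -> ->.
Qed.

Theorem theorem2p1 (n r k : nat) :
  0 < r -> 0 < k -> 2 * r + 1 <= n -> k <= 'C(n - r, r) ->
  gamma_ktuple_total (n.+1) r k <= gamma_ktuple_total n r k.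
Proof.
move=> _ _ le_2r1_n le_k_binom.
have le_rn : r <= n.
  by apply: leq_trans le_2r1_n; rewrite mul2n -addnn -addnA leq_addr.
have gamma_le_lift D :
    is_ktuple_tds n r k D -> gamma_ktuple_total n.+1 r k <= #|D|.
  move=> tdsD; rewrite -(card_imset _ (@widen_set_inj n)).
  exact/gamma_ktuple_total_le/widen_set_ktuple_tds.
apply: (leq_gamma_ktuple_total gamma_le_lift).
exact/gamma_le_lift/kneser_vertices_ktuple_tds.
Qed.
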